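(* Let $S_\omega$ be a standard graded skew polynomial algebra in $n$ variables at cube roots of unity. Then a subset $F\subset[n]$ is a face of $\Delta_\omega$ if and only if $F$ is an independent set of $I_v(M_\omega)$ for some $v\in[n]$. In particular, $\dim\Delta_\omega=\max\{\alpha(I_v(M_\omega))\mid v\in[n]\}-1$.
   Context: Let $k$ be an algebraically closed field of characteristic $0$; fix a primitive cube root of unity $\zeta_3$. For $\omega=(\omega_{ij})$ with $\omega_{ii}=1$, $\omega_{ij}\omega_{ji}=1$, all cube roots of unity, $S_\omega=k\langle x_1,\dots,x_n\rangle/(x_ix_j-\omega_{ij}x_jx_i)$ with $\deg x_i=1$; its E-matrix is $M_\omega=(m_{ij})$ over $\mathbb{Z}/3\mathbb{Z}$ with $\omega_{ij}=\zeta_3^{m_{ij}}$ (viewed as a digraph on $[n]$ with an edge $i\to j$ iff $m_{ij}=1$). The point simplicial complex $\Delta_\omega$ has vertex set $[n]$ and faces the $F\subset[n]$ with $\omega_{ij}\omega_{jh}\omega_{hi}=1$ for all distinct $i,j,h\in F$; $\dim\Delta=\max\{|F|-1\mid F\in\Delta\}$. For $v\in[n]$ let $X_v$ be the matrix with $(X_v)_{iv}=1$, $(X_v)_{vi}=-1$ for $i\ne v$ and other entries $0$. The isolation $I_v(M)$ of a skew-symmetric $M$ over $\mathbb{Z}/3\mathbb{Z}$ at $v$ is the unique matrix of the form $M+\sum_{u=1}^n a_uX_u$ ($a_u\in\mathbb{Z}/3\mathbb{Z}$) whose $v$-th row and column are zero. A set $T\subset[n]$ is independent in a skew-symmetric $N=(n_{ij})$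 if $n_{ij}=0$ for all distinct $i,j\in T$, and the independence number $\alpha(N)$ is the maximum size of an independent set. *)

From HB Require Import structures.
From mathcomp Require Import all_boot all_order all_algebra all_field.
Set Implicit Arguments. Unset Strict Implicit. Unset Printing Implicit Defensive.
Import Order.TTheory GRing.Theory Num.Theory.
Local Open Scope ring_scope.

(* omega : an n x n matrix over k of "skew" parameters omega_ij *)
Definition cube_root_param (k : fieldType) (n : nat) (w : 'M[k]_n) : Prop :=
  (forall i, w i i = 1) /\
  (forall i j, w i j * w j i = 1) /\
  (forall i j, w i j ^+ 3 = 1).

Definition is_Ematrix (k : fieldType) (n : nat) (zeta : k) (w : 'M[k]_n)
    (M : 'M['Z_3]_n) : Prop :=
  forall i j, w i j = zeta ^+ (nat_of_ord (M i j)).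

Definition is_face (k : fieldType) (n : nat) (w : 'M[k]_n) (F : {set 'I_n}) : Prop :=
  forall i j h, i \in F -> j \in F -> h \in F ->
    i != j -> j != h -> i != h -> w i j * w j h * w h i = 1.

Definition is_faceb (k : fieldType) (n : nat) (w : 'M[k]_n) (F : {set 'I_n}) : bool :=
  [forall i, forall j, forall h,
    [&& i \in F, j \in F, h \in F, i != j, j != h & i != h] ==>
    (w i j * w j h * w h i == 1)].

Definition dimDelta (k : fieldType) (n : nat) (w : 'M[k]_n) : int :=
  (\max_(F : {set 'I_n} | is_faceb w F) #|F|)%:Z - 1.

Definition Xmat (n : nat) (v : 'I_n) : 'M['Z_3]_n :=
  \matrix_(i, j) (if (j == v) && (i != v) then 1
                  else if (i == v) && (j != v) then -1 else 0).

Definition is_isolationb (n : nat) (M : 'M['Z_3]_n) (v : 'I_n) (N : 'M['Z_3]_n) : bool :=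
  [exists a : {ffun 'I_n -> 'Z_3}, N == M + \sum_(u < n) a u *: Xmat u] &&
  [forall i, (N v i == 0) && (N i v == 0)].

(* I_v(M): the (unique) isolation of M at v *)
Definition isolation (n : nat) (M : 'M['Z_3]_n) (v : 'I_n) : 'M['Z_3]_n :=
  odflt 0 [pick N | is_isolationb M v N].

Definition independent (n : nat) (N : 'M['Z_3]_n) (T : {set 'I_n}) : Prop :=
  forall i j, i \in T -> j \in T -> i != j -> N i j = 0.

Definition independentb (n : nat) (N : 'M['Z_3]_n) (T : {set 'I_n}) : bool :=
  [forall i, forall j, [&& i \in T, j \in T & i != j] ==> (N i j == 0)].

Definition alpha (n : nat) (N : 'M['Z_3]_n) : nat :=
  \max_(T : {set 'I_n} | independentb N T) #|T|.

From HB Require Import structures.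
From mathcomp Require Import all_boot all_order all_algebra all_field.
From mathcomp Require Import ring.
Set Implicit Arguments. Unset Strict Implicit.
Import Order.TTheory GRing.Theory Num.Theory.
Local Open Scope ring_scope.

(* Adding the multiples [a u *: Xmat u] with [a u = - M v u] kills the [v]-th
   row and column, giving the explicit isolation
   [I_v(M) i j = M i j + M j v + M v i].  The triangle sum of [M] on [i, j, h]
   is the triangle sum of [I_v(M)] on the same vertices, so faces are exactly
   the vertex sets on which some isolation vanishes: one direction takes [v]
   in the face, the other adds up three vanishing entries of [I_v(M)]. *)

Definition skew (n : nat) (M : 'M['Z_3]_n) : Prop := forall i j, M j i = - M i j.

Lemma Zp3_eq_opp (x : 'Z_3) : x = - x -> x = 0.
Proof. by apply: contra_eq; case: x => [[|[|[|]]]]. Qed.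

Lemma skew_diag (n : nat) (M : 'M['Z_3]_n) i : skew M -> M i i = 0.
Proof. by move=> skM; apply: Zp3_eq_opp; rewrite -skM. Qed.

Section CubeRootExponent.

Variables (k : fieldType) (zeta : k).
Hypothesis zeta_prim : 3.-primitive_root zeta.

Lemma expr_Zp3D (x y : 'Z_3) : zeta ^+ (x + y)%R = zeta ^+ x * zeta ^+ y.
Proof. by rewrite [nat_of_ord _]/= (prim_expr_mod zeta_prim) exprD. Qed.

Lemma expr_Zp3_eq1 (x : 'Z_3) : (zeta ^+ x == 1) = (x == 0).
Proof. by rewrite -(expr0 zeta) (eq_prim_root_expr zeta_prim) modn_small. Qed.

Variables (n : nat) (w : 'M[k]_n) (M : 'M['Z_3]_n).
Hypotheses (w_param : cube_root_param w) (wM : is_Ematrix zeta w M).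

Lemma Ematrix_skew : skew M.
Proof.
move=> i j; apply/eqP; rewrite -addr_eq0 -expr_Zp3_eq1 expr_Zp3D -!wM mulrC.
by case: w_param => _ [-> _].
Qed.

Lemma Ematrix_triangle i j h :
  w i j * w j h * w h i = 1 <-> M i j + M j h + M h i = 0.
Proof.
rewrite !wM -!expr_Zp3D; split => [/eqP|->]; last exact: expr0.
by rewrite expr_Zp3_eq1 => /eqP.
Qed.

End CubeRootExponent.

Lemma sum_Xmat (n : nat) (a : 'I_n -> 'Z_3) i j :
  (\sum_(u < n) a u *: Xmat u) i j = if i == j then 0 else a j - a i.
Proof.
rewrite summxE; under eq_bigr => u _ do rewrite !mxE.
have [<-|ij] := eqVneq i j.
  by apply: big1 => u _; case: (i == u); rewrite ?andbF ?mulr0.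
rewrite (bigD1 j) // (bigD1 i) //=.
rewrite !eqxx ij (eq_sym j i) (negbTE ij) /=.
rewrite big1 => [|u /andP[ui uj]]; first by rewrite mulr1 mulrN1 addr0.
by rewrite !(eq_sym _ u) (negbTE ui) (negbTE uj) mulr0.
Qed.

Definition isolation_mx (n : nat) (M : 'M['Z_3]_n) (v : 'I_n) : 'M['Z_3]_n :=
  \matrix_(i, j) (M i j + M j v + M v i).

Section Isolation.

Variables (n : nat) (M : 'M['Z_3]_n).
Hypothesis skM : skew M.

Lemma isolation_mx_isolationb v : is_isolationb M v (isolation_mx M v).
Proof.
apply/andP; split.
  apply/existsP; exists [ffun u => - M v u]; apply/eqP/matrixP => i j.
  rewrite !mxE sum_Xmat !ffunE; case: eqP => [<-|_].
    by rewrite skew_diag // (skM v i); ring.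
  by rewrite (skM v j); ring.
by apply/forallP => i; rewrite !mxE skew_diag // (skM v i) !addr0 subrr addNr eqxx.
Qed.

Lemma isolationb_uniq v N : is_isolationb M v N -> N = isolation_mx M v.
Proof.
case/andP=> /existsP[a /eqP ->] /forallP zero_row.
have a_row i : a i = a v - M v i.
  have [<-|vi] := eqVneq v i; first by rewrite skew_diag // subr0.
  have /andP[/eqP + _] := zero_row i.
  by rewrite !mxE sum_Xmat (negbTE vi) => /eqP; rewrite addr_eq0 opprB => /eqP ->; ring.
apply/matrixP => i j; rewrite !mxE sum_Xmat (a_row i) (a_row j).
by case: eqP => [<-|_]; rewrite ?skew_diag // (skM v) ?(skM v j); ring.
Qed.

Lemma isolationE v : isolation M v = isolation_mx M v.
Proof.
rewrite /isolation; case: pickP => [N /isolationb_uniq //|].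
by move/(_ (isolation_mx M v)); rewrite isolation_mx_isolationb.
Qed.

Lemma triangle_isolation_mx v i j h :
  M i j + M j h + M h i =
  isolation_mx M v i j + isolation_mx M v j h + isolation_mx M v h i.
Proof. by rewrite !mxE (skM v i) (skM v j) (skM v h); ring. Qed.

Definition triangle_free (F : {set 'I_n}) : Prop :=
  forall i j h, i \in F -> j \in F -> h \in F ->
    i != j -> j != h -> i != h -> M i j + M j h + M h i = 0.

Lemma triangle_free_independent (F : {set 'I_n}) v :
  v \in F -> triangle_free F -> independent (isolation_mx M v) F.
Proof.
move=> vF trF i j iF jF ij; rewrite mxE.
have [->|iv] := eqVneq i v; first by rewrite skew_diag // (skM j v); ring.
have [->|jv] := eqVneq j v; first by rewrite skew_diag // (skM i v); ring.
by apply: trF; rewrite // eq_sym.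
Qed.

Lemma independent_triangle_free (F : {set 'I_n}) v :
  independent (isolation_mx M v) F -> triangle_free F.
Proof.
move=> indF i j h iF jF hF ij jh ih.
by rewrite (triangle_isolation_mx v) !indF ?addr0 // eq_sym.
Qed.

End Isolation.

Lemma is_faceP (k : fieldType) (n : nat) (w : 'M[k]_n) (F : {set 'I_n}) :
  reflect (is_face w F) (is_faceb w F).
Proof.
apply: (iffP forallP) => [fF i j h iF jF hF ij jh ih | fF i].
  have /forallP/(_ h)/implyP := forallP (fF i) j.
  by rewrite iF jF hF ij jh ih => /(_ isT)/eqP.
apply/forallP => j; apply/forallP => h; apply/implyP.
by case/and5P=> iF jF hF ij /andP[jh ih]; apply/eqP/fF.
Qed.

Lemma independentP (n : nat) (N : 'M['Z_3]_n) (T : {set 'I_n}) :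
  reflect (independent N T) (independentb N T).
Proof.
apply: (iffP forallP) => [indT i j iT jT ij | indT i].
  by have /implyP := forallP (indT i) j; rewrite iT jT ij => /(_ isT)/eqP.
by apply/forallP => j; apply/implyP => /and3P[iT jT ij]; apply/eqP/indT.
Qed.

Lemma bigmax_exists (I T : finType) (P : pred T) (Q : I -> pred T) (f : T -> nat) :
  (forall x, P x = [exists i, Q i x]) ->
  \max_(x | P x) f x = \max_i \max_(x | Q i x) f x.
Proof.
move=> PQ; apply/eqP; rewrite eqn_leq; apply/andP; split.
  apply/bigmax_leqP => x; rewrite PQ => /existsP[i Qix].
  exact: leq_trans (leq_bigmax_cond _ Qix) (leq_bigmax i).
apply/bigmax_leqP => i _; apply/bigmax_leqP => x Qix.
by apply: leq_bigmax_cond; rewrite PQ; apply/existsP; exists i.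
Qed.

Theorem proposition5p5 (k : closedFieldType) (n : nat) (zeta : k)
  (w : 'M[k]_n) (M : 'M['Z_3]_n) :
  [pchar k] =i pred0 ->
  3.-primitive_root zeta ->
  (0 < n)%N ->
  cube_root_param w ->
  is_Ematrix zeta w M ->
  (forall F : {set 'I_n}, is_face w F <-> exists v : 'I_n, independent (isolation M v) F) /\
  dimDelta w = (\max_(v < n) alpha (isolation M v))%:Z - 1.
Proof.
move=> _ zeta_prim n_gt0 w_param wM.
have skM := Ematrix_skew zeta_prim w_param wM.
have face_triangle_free F : is_face w F <-> triangle_free M F.
  by split=> trF i j h *; apply/(Ematrix_triangle zeta_prim wM)/trF.
have faceE F : is_face w F <-> exists v, independent (isolation M v) F.
  rewrite face_triangle_free; split => [trF | [v]]; last first.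
    by rewrite isolationE //; apply: independent_triangle_free.
  have [->|[v vF]] := set_0Vmem F.
    by exists (Ordinal n_gt0) => i j; rewrite in_set0.
  by exists v; rewrite isolationE //; apply: triangle_free_independent.
split=> //; rewrite /dimDelta /alpha; congr (_%:Z - 1).
apply: (@bigmax_exists _ _ _ (fun v => independentb (isolation M v))) => F.
apply/is_faceP/existsP => [/faceE[v indF] | [v indF]].
  by exists v; apply/independentP.
by apply/faceE; exists v; apply/independentP.
Qed.
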